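(* Let $\Delta\ge 4$ be an integer and for positive integers $i,j$ define \[ F(i,j)=(4\Delta-6)\Bigl(\frac{1}{i}+\frac{1}{j}\Bigr)+\Delta^2-6\Delta+3+\frac{6}{\Delta}-(i-j)^2 . \] Then for every integer $i$ with $\left\lfloor \frac{\Delta+3}{2}\right\rfloor+1\le i\le \Delta-1$ we have the strict inequality \[ i\,F(i,2) > F(\Delta,\Delta). \] *)

From mathcomp Require Import all_boot all_order all_algebra.
Set Implicit Arguments. Unset Strict Implicit. Unset Printing Implicit Defensive.
Import Order.TTheory GRing.Theory Num.Theory.
Local Open Scope ring_scope.

Definition F (D i j : nat) : rat :=
  (4 * D%:R - 6) * ((i%:R)^-1 + (j%:R)^-1)
  + (D%:R) ^+ 2 - 6 * D%:R + 3 + 6 / D%:R - (i%:R - j%:R) ^+ 2.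

(* For fixed Δ, the quantity 4Δ (i F(i,2) - F(Δ,Δ)) is a cubic in i with negative
   leading coefficient, hence concave on the admissible range (Δ+4)/2 <= i <= Δ-1.
   Writing it as its chord between these endpoints plus the concavity correction
   gives three terms that are visibly nonnegative, the last one, 4Δ(Δ-2)(Δ+1),
   being positive. *)
From mathcomp Require Import all_boot all_order all_algebra.
From mathcomp Require Import ring lra.
Import Order.TTheory GRing.Theory Num.Theory.
Local Open Scope ring_scope.

Definition gap_poly {R : comPzRingType} (d x : R) : R :=
  d * (2 * x - d - 4) * (d - 1 - x) * (2 * x + 3 * d - 6)
  + (d - 1 - x) * (3 * d ^+ 3 - 2 * d ^+ 2 + 12 * d - 24)
  + 4 * d * (d - 2) * (d + 1).

Lemma gap_poly_gt0 (R : realDomainType) (d x : R) :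
  2 < d -> d + 4 <= 2 * x -> x <= d - 1 -> 0 < gap_poly d x.
Proof.
move=> d_gt2 lo hi.
have concavity : 0 <= d * (2 * x - d - 4) * (d - 1 - x) * (2 * x + 3 * d - 6).
  by rewrite !mulr_ge0 //; lra.
have slope : 0 <= (d - 1 - x) * (3 * d ^+ 3 - 2 * d ^+ 2 + 12 * d - 24).
  rewrite mulr_ge0 //; first lra.
  have -> : 3 * d ^+ 3 - 2 * d ^+ 2 + 12 * d - 24 = d ^+ 2 * (3 * d - 2) + 12 * (d - 2).
    by ring.
  by rewrite addr_ge0 // mulr_ge0 ?sqr_ge0 //; lra.
have right_end : 0 < 4 * d * (d - 2) * (d + 1) by rewrite !mulr_gt0 //; lra.
rewrite /gap_poly; lra.
Qed.

Lemma F_gap_scaled (D i : nat) : D != 0%N -> i != 0%N ->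
  4 * D%:R * (i%:R * F D i 2 - F D D D) = gap_poly (D%:R : rat) i%:R.
Proof.
move=> D_neq0 i_neq0.
by rewrite /F /gap_poly; field; rewrite !pnatr_eq0 D_neq0 i_neq0.
Qed.

Theorem lemma4p2 (D i : nat) (hD : (4 <= D)%N)
  (hlo : ((D + 3)./2 + 1 <= i)%N) (hhi : (i <= D - 1)%N) :
  i%:R * F D i 2 > F D D D.
Proof.
have lo : (D + 4 <= i.*2)%N by move: hlo; rewrite addn1 ltn_half_double addn3 addn4.
have D_gt2 : (2 < D)%N by apply: leq_trans hD.
have D_gt0 : (0 < D)%N by apply: ltn_trans D_gt2.
have i_gt0 : (0 < i)%N by rewrite -double_gt0; apply: leq_trans lo; rewrite addn4.
have scale_gt0 : 0 < 4 * D%:R :> rat by rewrite mulr_gt0 ?ltr0n.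
rewrite -subr_gt0 -(pmulr_rgt0 _ scale_gt0) F_gap_scaled -?lt0n //.
apply: gap_poly_gt0; first by rewrite ltr_nat.
- by rewrite -natrM -natrD ler_nat mul2n.
- rewrite lerBrDr natr1 ler_nat; apply: leq_ltn_trans hhi _.
  by rewrite subn1 ltn_predL.
Qed.
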